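(* Let $G$ be a connected graph, $(u,v)\in V_p$ and $w\in V(G)$. Then $r_w(u,v)=\frac12$ if and only if $w\in\{u,v\}$ and $V_i(u)\setminus\{v\}=V_i(v)\setminus\{u\}$ for every $1\le i\le\mathrm{diam}(G)$, where $V_i(x)=\{y\in V(G)\setminus\{x\}: d(x,y)=i\}$.
   Context: Graphs are finite, simple and connected; $d(u,v)$ denotes the shortest-path distance. $V_p$ denotes the set of all unordered pairs $(u,v)$ of distinct vertices. A vertex $x$ resolves the pair $(u,v)$ if $d(x,u)\neq d(x,v)$. For $(u,v)\in V_p$, $R(u,v)$ is the set of all vertices resolving $(u,v)$. The resolving share of a vertex $w$ for $(u,v)$ is $r_w(u,v)=\frac{1}{|R(u,v)|}$ if $w$ resolves $u$ and $v$, and $r_w(u,v)=0$ otherwise. *)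

From mathcomp Require Import all_boot all_order all_algebra.
Set Implicit Arguments. Unset Strict Implicit. Unset Printing Implicit Defensive.
Import Order.TTheory GRing.Theory Num.Theory.

Section Graph.
Variables (T : finType) (e : rel T).

Definition simple_graph : Prop := symmetric e /\ irreflexive e.
Definition connected_graph : Prop := forall x y : T, connect e x y.

Definition walkn (x y : T) (n : nat) : bool :=
  [exists p : n.-tuple T, path e x p && (last x p == y)].

(* shortest-path distance: least n < #|T| admitting a walk of length n
   (in a connected graph such an n always exists). *)
Definition dist (x y : T) : nat :=
  \big[minn/#|T|]_(n < #|T| | walkn x y n) n.

Definition diam : nat := \max_(x : T) \max_(y : T) dist x y.

Definition Vi (i : nat) (x : T) : {set T} :=
  [set y | (y != x) && (dist x y == i)].

Definition resolving_set (u v : T) : {set T} :=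
  [set x | dist x u != dist x v].

Definition rshare (w u v : T) : rat :=
  if w \in resolving_set u v then ((#|resolving_set u v|%:R)^-1)%R else 0%R.
End Graph.

From mathcomp Require Import all_boot all_order all_algebra.
Import Order.TTheory GRing.Theory Num.Theory.

Set Implicit Arguments.
Unset Strict Implicit.

(* Since u and v always resolve the pair (u, v), the share 1/2 forces
   R(u,v) = {u, v} with w among them.  And a vertex y outside {u, v} fails to
   resolve (u, v) exactly when d(u,y) = d(v,y), i.e. when y lies in the same
   layers V_i(u) and V_i(v); every such i is between 1 and diam G. *)

Lemma bigminn_leq {I : eqType} {s : seq I} {P : pred I} (F : I -> nat) {m i} :
  i \in s -> P i -> (\big[minn/m]_(j <- s | P j) F j <= F i)%N.
Proof.
elim: s => [//|a s IHs]; rewrite inE big_cons => /orP[/eqP <- | s_i] Pi.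
  by rewrite Pi geq_minl.
by case: ifP => _; rewrite ?geq_min IHs ?orbT.
Qed.

Section Distance.
Variables (T : finType) (e : rel T).

Lemma walkn_sym : symmetric e -> forall x y n, walkn e x y n -> walkn e y x n.
Proof.
move=> e_sym x y n /existsP[p /andP[e_p /eqP p_last]]; apply/existsP.
have size_p' : size (rev (belast x p)) == n.
  by rewrite size_rev size_belast size_tuple.
exists (Tuple size_p') => /=; rewrite -p_last rev_path.
apply/andP; split; first by rewrite (@eq_path _ (fun z => e^~ z) e).
by case/lastP: (tval p) => [|q z] //=; rewrite belast_rcons last_rcons rev_cons last_rcons.
Qed.

Lemma dist_sym : symmetric e -> forall x y, dist e x y = dist e y x.
Proof. by move=> e_sym x y; apply: eq_bigl => n; apply/idP/idP; apply: walkn_sym. Qed.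

Lemma distnn x : dist e x x = 0%N.
Proof.
have T_gt0 : (0 < #|T|)%N by apply/card_gt0P; exists x.
apply/eqP; rewrite -leqn0.
apply: (bigminn_leq (fun n : 'I_#|T| => nat_of_ord n) (mem_index_enum (Ordinal T_gt0))).
by apply/existsP; exists [tuple] => /=.
Qed.

Lemma dist_gt0 x y : x != y -> (0 < dist e x y)%N.
Proof.
move=> neq_xy; apply: (big_ind (fun m => 0 < m)%N) => [||i].
- by apply/card_gt0P; exists x.
- by move=> a b a_gt0 b_gt0; rewrite leq_min a_gt0 b_gt0.
case/existsP=> p /andP[_]; rewrite lt0n.
case: i p => [[|i] lt_i] //= p; rewrite tuple0 /=.
by rewrite (negbTE neq_xy).
Qed.

Lemma dist_le_diam x y : (dist e x y <= diam e)%N.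
Proof. exact: leq_trans (leq_bigmax (F := dist e x) y) (leq_bigmax x). Qed.

Lemma in_Vi_setD : symmetric e -> forall i x z y, y != x -> y != z ->
  (y \in Vi e i x :\ z) = (dist e y x == i).
Proof. by move=> e_sym i x z y neq_yx neq_yz; rewrite !inE neq_yx neq_yz dist_sym. Qed.

End Distance.

Section ResolvingSet.
Variables (T : finType) (e : rel T) (u v : T).
Hypotheses (e_sym : symmetric e) (neq_uv : u != v).

Lemma set2_sub_resolving_set : [set u; v] \subset resolving_set e u v.
Proof.
apply/subsetP => z /set2P[] ->; rewrite inE distnn.
  by rewrite eq_sym -lt0n dist_gt0.
by rewrite -lt0n dist_gt0 // eq_sym.
Qed.

Lemma card_resolving_set_eq2 :
  #|resolving_set e u v| = 2 <-> resolving_set e u v = [set u; v].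
Proof.
split=> [card_R | ->]; last by rewrite cards2 neq_uv.
by apply/esym/eqP; rewrite eqEcard set2_sub_resolving_set cards2 neq_uv card_R.
Qed.

Lemma resolving_set_eq2P : resolving_set e u v = [set u; v] <->
  (forall i, (1 <= i <= diam e)%N -> Vi e i u :\ v = Vi e i v :\ u).
Proof.
split=> [R_uv i _ | layers_eq].
  apply/setP => y; have [-> | neq_yv] := eqVneq y v; first by rewrite !inE eqxx /= ?andbF.
  have [-> | neq_yu] := eqVneq y u; first by rewrite !inE eqxx /= ?andbF.
  have : y \notin resolving_set e u v by rewrite R_uv !inE negb_or neq_yu.
  rewrite inE negbK => /eqP d_eq.
  by rewrite !(in_Vi_setD e_sym) // d_eq.
apply/eqP; rewrite eqEsubset set2_sub_resolving_set andbT.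
apply/subsetP => y; rewrite !inE.
have [-> | neq_yu] := eqVneq y u; first by [].
have [-> | neq_yv] := eqVneq y v; first by [].
have i_range : (1 <= dist e y u <= diam e)%N by rewrite dist_gt0 // dist_le_diam.
move/setP/(_ y): (layers_eq _ i_range).
by rewrite !(in_Vi_setD e_sym) // eqxx => /esym/eqP ->; rewrite eqxx.
Qed.

End ResolvingSet.

Lemma rshare_eq_half (T : finType) (e : rel T) (w u v : T) :
  rshare e w u v = (2%:R^-1)%R :> rat <->
  w \in resolving_set e u v /\ #|resolving_set e u v| = 2.
Proof.
rewrite /rshare; case: ifP => [w_R | _]; last first.
  by split=> [/eqP | []//]; rewrite eq_sym invr_eq0 pnatr_eq0.
split=> [/invr_inj/eqP | [_ ->]] //.
by rewrite eqr_nat => /eqP.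
Qed.

Unset Implicit Arguments.

Theorem lemma2p5 (T : finType) (e : rel T) (u v w : T) :
  simple_graph e -> connected_graph e -> u != v ->
  (rshare e w u v = ((2%:R)^-1)%R :> rat <->
   (w \in [set u; v] /\
    forall i : nat, (1 <= i <= diam e)%N ->
      Vi e i u :\ v = Vi e i v :\ u)).
Proof.
move=> [e_sym _] _ neq_uv; split.
  case/rshare_eq_half=> w_R /(card_resolving_set_eq2 e neq_uv) R_uv.
  by split; [rewrite -R_uv | apply/(resolving_set_eq2P e_sym neq_uv)].
case=> w_uv /(resolving_set_eq2P e_sym neq_uv) R_uv.
by apply/rshare_eq_half; rewrite R_uv cards2 neq_uv.
Qed.
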